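(* For all integers $n,m$, the multiplication map $\mathcal{L}_n\otimes\mathcal{L}_m\to\mathcal{L}_{n+m}$, $x\otimes y\mapsto xy$, induces an isomorphism of $\mathcal{A}(\mathbb{CP}^1_q)$-bimodules $\mathcal{L}_n\otimes_{\mathcal{A}(\mathbb{CP}^1_q)}\mathcal{L}_m\simeq\mathcal{L}_{n+m}$.
   Context: Fix $0<q<1$. Let $\mathcal{A}(SU_q(2))$ be the unital complex $*$-algebra generated by $a,c$ subject to $ac=qca$, $ac^*=qc^*a$, $cc^*=c^*c$, $a^*a+c^*c=aa^*+q^2cc^*=1$. Let $U_q(su(2))$ be the Hopf $*$-algebra generated by $K,K^{-1},E,F$ with $KK^{-1}=K^{-1}K=1$, $KE=qEK$, $KF=q^{-1}FK$, $EF-FE=(K^2-K^{-2})/(q-q^{-1})$, coproduct $\Delta K=K\otimes K$, $\Delta E=E\otimes K+K^{-1}\otimes E$, $\Delta F=F\otimes K+K^{-1}\otimes F$, counit $\epsilon(K)=1$, $\epsilon(E)=\epsilon(F)=0$. It acts on $\mathcal{A}(SU_q(2))$ from the left, $g\otimes x\mapsto g\triangleright x$, making $\mathcal{A}(SU_q(2))$ a left module algebra ($g\triangleright(xy)=\sum(g_{(1)}\triangleright x)(g_{(2)}\triangleright y)$, $g\triangleright1=\epsilon(g)1$), with $K\triangleright a=q^{-1/2}a$, $K\triangleright c=q^{-1/2}c$, $K\triangleright a^*=q^{1/2}a^*$, $K\triangleright c^*=q^{1/2}c^*$. For $n\in\mathbb{Z}$ let $\mathcal{L}_n=\{x\in\mathcal{A}(SU_q(2)):K\triangleright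 x=q^{n/2}x\}$; then $\mathcal{L}_n\mathcal{L}_m\subseteq\mathcal{L}_{n+m}$. The coordinate algebra of the quantum projective line is $\mathcal{A}(\mathbb{CP}^1_q):=\mathcal{L}_0$ (the $*$-subalgebra generated by $ac^*,ca^*,cc^*$), and each $\mathcal{L}_n$ is an $\mathcal{A}(\mathbb{CP}^1_q)$-bimodule under multiplication. *)

From HB Require Import structures.
From mathcomp Require Import all_boot all_algebra complex.
From mathcomp Require Import reals.
Set Implicit Arguments. Unset Strict Implicit. Unset Printing Implicit Defensive.
Import GRing.Theory Num.Theory.
Local Open Scope complex_scope.
Local Open Scope ring_scope.

(* The defining relations of A(SU_q(2)), as an algebra on the four generators
   a, c, ad (= a^* ), cd (= c^* ).  The *-ideal generated by the relations is
   the ideal generated by the relations together with their adjoints; since q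
   is real, the adjoints of  ac = q ca  and  ac^* = q c^* a  are
   c^* a^* = q a^* c^*  and  c a^* = q a^* c, while the other three relations
   are self-adjoint. *)
Definition SUq_rel (R : realType) (q : R) (B : algType R[i]) (a c ad cd : B) : Prop :=
  a * c = q%:C *: (c * a) /\
  a * cd = q%:C *: (cd * a) /\
  c * cd = cd * c /\
  ad * a + cd * c = 1 /\
  a * ad + (q%:C ^+ 2) *: (c * cd) = 1 /\
  cd * ad = q%:C *: (ad * cd) /\
  c * ad = q%:C *: (ad * c).

Definition is_ASUq (R : realType) (q : R) (A : algType R[i]) (a c ad cd : A) : Prop :=
  SUq_rel q a c ad cd /\
  forall (B : algType R[i]) (a' c' ad' cd' : B), SUq_rel q a' c' ad' cd' ->
    exists f : {lrmorphism A -> B},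
      [/\ f a = a', f c = c', f ad = ad', f cd = cd' &
        forall g : {lrmorphism A -> B},
          g a = a' -> g c = c' -> g ad = ad' -> g cd = cd' -> forall x, g x = f x].

Definition Lmod (R : realType) (q : R) (A : algType R[i]) (K : A -> A) (n : int)
  : pred A := fun x => K x == ((Num.sqrt q)%:C ^ n) *: x.

(* Tensor products over a subring are not in the library; we use the defining
   universal property.  [mult_tensor_iso Bs Ln Lm Lnm] says that the
   multiplication map  Ln x Lm -> Lnm,  (x,y) |-> xy,  is a universal
   Bs-balanced biadditive map, i.e. that it induces an isomorphism
   Ln (x)_{Bs} Lm  ~=  Lnm  (of abelian groups; this induced map is
   automatically a Bs-bimodule map since b(xy)b' = (bx)(yb')). *)
Definition mult_tensor_iso (A : nzRingType) (Bs Ln Lm Lnm : pred A) : Prop :=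
  forall (W : zmodType) (beta : A -> A -> W),
    (forall x x' y, x \in Ln -> x' \in Ln -> y \in Lm ->
        beta (x + x') y = beta x y + beta x' y) ->
    (forall x y y', x \in Ln -> y \in Lm -> y' \in Lm ->
        beta x (y + y') = beta x y + beta x y') ->
    (forall x b y, x \in Ln -> b \in Bs -> y \in Lm ->
        beta (x * b) y = beta x (b * y)) ->
    exists f : A -> W,
      [/\ forall u v, u \in Lnm -> v \in Lnm -> f (u + v) = f u + f v,
          forall x y, x \in Ln -> y \in Lm -> beta x y = f (x * y) &
          forall g : A -> W,
            (forall u v, u \in Lnm -> v \in Lnm -> g (u + v) = g u + g v) ->
            (forall x y, x \in Ln -> y \in Lm -> beta x y = g (x * y)) ->
            forall u, u \in Lnm -> g u = f u].

(* The grading of A(SU_q(2)) by the weight of K is strongly graded: the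
   relations  a^* a + c^* c = 1  and  a a^* + q^2 c c^* = 1  exhibit 1 in
   L_1 L_{-1} and in L_{-1} L_1, hence, multiplying such decompositions,
   1 = sum_i x_i y_i  with  x_i in L_n,  y_i in L_{-n}  for every n.  Then
   z |-> sum_i x_i (x) y_i z  inverts the multiplication map
   L_n (x)_{L_0} L_m -> L_{n+m}: for x in L_n and y in L_m,
   sum_i x_i (x) y_i x y = sum_i x_i y_i x (x) y = x (x) y, since y_i x is in L_0. *)
From HB Require Import structures.
From mathcomp Require Import all_boot all_algebra complex.
From mathcomp Require Import reals.
Import GRing.Theory Num.Theory.
Local Open Scope complex_scope.
Local Open Scope ring_scope.

Set Implicit Arguments.
Unset Strict Implicit.

Section GradedRing.

Variables (A : nzRingType) (L : int -> pred A).
Hypothesis mem_grade0 : forall n, 0 \in L n.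
Hypothesis mem_gradeD : forall n x y, x \in L n -> y \in L n -> x + y \in L n.
Hypothesis mem_gradeM :
  forall n m x y, x \in L n -> y \in L m -> x * y \in L (n + m).

Lemma mem_gradeM_eq n m k x y :
  x \in L n -> y \in L m -> n + m = k -> x * y \in L k.
Proof. by move=> hx hy <-; exact: mem_gradeM. Qed.

Lemma mem_grade_sum n (r : seq (A * A)) (F : A * A -> A) :
  (forall p, p \in r -> F p \in L n) -> \sum_(p <- r) F p \in L n.
Proof.
elim: r => [|p r IH] hF; first by rewrite big_nil.
rewrite big_cons mem_gradeD ?hF ?mem_head // IH // => p' hp'.
by rewrite hF // inE hp' orbT.
Qed.

Lemma additive_on_grade_sum (W : zmodType) n (g : A -> W)
    (r : seq (A * A)) (F : A * A -> A) :
  (forall u v, u \in L n -> v \in L n -> g (u + v) = g u + g v) ->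
  (forall p, p \in r -> F p \in L n) ->
  g (\sum_(p <- r) F p) = \sum_(p <- r) g (F p).
Proof.
move=> gD; elim: r => [|p r IH] hF.
  have g00 := gD 0 0 (mem_grade0 n) (mem_grade0 n).
  by rewrite !big_nil; apply: (addrI (g 0)); rewrite -g00 !addr0.
have hFr p' : p' \in r -> F p' \in L n by move=> hp'; rewrite hF // inE hp' orbT.
by rewrite !big_cons gD ?IH ?hF ?mem_head ?mem_grade_sum.
Qed.

Definition one_mem_grade_prod n := exists r : seq (A * A),
  (forall p, p \in r -> p.1 \in L n /\ p.2 \in L (- n)) /\
  \sum_(p <- r) p.1 * p.2 = 1.

Lemma one_mem_grade_prodD n k :
  one_mem_grade_prod n -> one_mem_grade_prod k -> one_mem_grade_prod (n + k).
Proof.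
move=> [r [hr sr]] [t [ht st]].
exists [seq (p.1 * p'.1, p'.2 * p.2) | p <- r, p' <- t]; split.
  move=> x /allpairsPdep [p [p' [hp hp' ->]]] /=.
  have [h1 h2] := hr p hp; have [h1' h2'] := ht p' hp'.
  split; first exact: mem_gradeM.
  by apply: mem_gradeM_eq h2' h2 _; rewrite opprD addrC.
rewrite big_allpairs_dep /= -sr; apply: eq_bigr => p _.
rewrite -{2}[p.1]mulr1 -st mulr_sumr mulr_suml; apply: eq_bigr => p' _.
by rewrite !mulrA.
Qed.

Lemma strongly_graded :
  one_mem_grade_prod 1 -> one_mem_grade_prod (- 1) ->
  forall n, one_mem_grade_prod n.
Proof.
move=> h1 hN1.
have hS k : one_mem_grade_prod k.+1%:Z /\ one_mem_grade_prod (- k.+1%:Z).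
  elim: k => [|k [IHp IHn]]; first by [].
  rewrite -addn1 PoszD opprD.
  by split; apply: one_mem_grade_prodD.
case=> [[|k]|k]; last by rewrite NegzE; case: (hS k).
- by have -> : 0%N = 1 + (- 1) :> int by []; exact: one_mem_grade_prodD.
- by case: (hS k).
Qed.

Lemma sum_grade_factor (r : seq (A * A)) z :
  \sum_(p <- r) p.1 * p.2 = 1 -> \sum_(p <- r) p.1 * (p.2 * z) = z.
Proof.
by move=> sr; under eq_bigr do rewrite mulrA; rewrite -big_distrl /= sr mul1r.
Qed.

Theorem mult_tensor_iso_of_one_mem n m :
  one_mem_grade_prod n -> mult_tensor_iso (L 0) (L n) (L m) (L (n + m)).
Proof.
move=> [r [hr sr]] W beta betaD1 betaD2 beta_bal.
have fst_mem p : p \in r -> p.1 \in L n by case/hr.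
have snd_mem p : p \in r -> p.2 \in L (- n) by case/hr.
have snd_mul_mem p z : p \in r -> z \in L (n + m) -> p.2 * z \in L m.
  by move=> hp hz; apply: mem_gradeM_eq (snd_mem p hp) hz _; rewrite addKr.
exists (fun z => \sum_(p <- r) beta p.1 (p.2 * z)); split.
- move=> u v hu hv; rewrite -big_split /=; apply: eq_big_seq => p hp.
  by rewrite mulrDr betaD2 ?fst_mem ?snd_mul_mem.
- move=> x y hx hy.
  have snd_x_mem0 p : p \in r -> p.2 * x \in L 0.
    by move=> hp; apply: mem_gradeM_eq (snd_mem p hp) hx _; rewrite addNr.
  rewrite -{1}(sum_grade_factor x sr).
  rewrite (additive_on_grade_sum (g := beta^~ y) (n := n)).
  + by apply: eq_big_seq => p hp; rewrite beta_bal ?fst_mem ?snd_x_mem0 ?mulrA.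
  + by move=> u v hu hv; rewrite betaD1.
  + move=> p hp; apply: mem_gradeM_eq (fst_mem p hp) (snd_x_mem0 p hp) _.
    by rewrite addr0.
- move=> g gD gM u hu.
  rewrite -{1}(sum_grade_factor u sr) (additive_on_grade_sum (n := n + m)) //.
    by apply: eq_big_seq => p hp; rewrite gM ?fst_mem ?snd_mul_mem.
  move=> p hp; apply: mem_gradeM_eq (fst_mem p hp) (snd_mul_mem p u hp hu) _.
  by rewrite addrC.
Qed.

End GradedRing.

Section WeightGrading.

Variables (R : realType) (q : R) (A : algType R[i]) (K : {lrmorphism A -> A}).
Hypothesis sqrtq_neq0 : (Num.sqrt q)%:C != 0 :> R[i].

Lemma mem_Lmod n x : (x \in Lmod q K n) = (K x == (Num.sqrt q)%:C ^ n *: x).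
Proof. by []. Qed.

Lemma mem_Lmod0 n : 0 \in Lmod q K n.
Proof. by rewrite mem_Lmod raddf0 scaler0. Qed.

Lemma mem_LmodD n x y : x \in Lmod q K n -> y \in Lmod q K n -> x + y \in Lmod q K n.
Proof.
rewrite !mem_Lmod => /eqP hx /eqP hy; apply/eqP.
by transitivity (K x + K y); [exact: raddfD | rewrite hx hy scalerDr].
Qed.

Lemma mem_LmodZ n (k : R[i]) x : x \in Lmod q K n -> k *: x \in Lmod q K n.
Proof.
rewrite !mem_Lmod => /eqP hx; apply/eqP.
by transitivity (k *: K x); [exact: linearZ | rewrite hx !scalerA mulrC].
Qed.

Lemma mem_LmodM n m x y :
  x \in Lmod q K n -> y \in Lmod q K m -> x * y \in Lmod q K (n + m).
Proof.
rewrite !mem_Lmod => /eqP hx /eqP hy; apply/eqP.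
transitivity (K x * K y); first exact: rmorphM.
by rewrite hx hy -scalerAl -scalerAr scalerA expfzDr.
Qed.

Lemma mem_Lmod_weight n x : K x = (Num.sqrt q)%:C ^ n *: x -> x \in Lmod q K n.
Proof. by move=> hx; rewrite mem_Lmod hx. Qed.

End WeightGrading.

Theorem proposition3p1 (R : realType) (q : R) (hq0 : 0 < q) (hq1 : q < 1)
  (A : algType R[i]) (a c ad cd : A) (hA : is_ASUq q a c ad cd)
  (K : {lrmorphism A -> A})
  (Ka : K a = (Num.sqrt q)%:C ^-1 *: a) (Kc : K c = (Num.sqrt q)%:C ^-1 *: c)
  (Kad : K ad = (Num.sqrt q)%:C *: ad) (Kcd : K cd = (Num.sqrt q)%:C *: cd)
  (n m : int) :
  mult_tensor_iso (Lmod q K 0) (Lmod q K n) (Lmod q K m) (Lmod q K (n + m)).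
Proof.
have s_neq0 : (Num.sqrt q)%:C != 0 :> R[i].
  by rewrite -[0]/((0 : R)%:C) (inj_eq (@complexI R)) lt0r_neq0 ?sqrtr_gt0.
have [[_ [_ [_ [unit_adL [unit_adR _]]]]] _] := hA.
have [La Lc] : a \in Lmod q K (- 1) /\ c \in Lmod q K (- 1).
  by split; apply: mem_Lmod_weight; rewrite exprN1 ?Ka ?Kc.
have [Lad Lcd] : ad \in Lmod q K 1 /\ cd \in Lmod q K 1.
  by split; apply: mem_Lmod_weight; rewrite expr1z ?Kad ?Kcd.
have LmodM := mem_LmodM (K := K) s_neq0.
have one_mem1 : one_mem_grade_prod (Lmod q K) 1.
  exists [:: (ad, a); (cd, c)]; split.
    by move=> p; rewrite !inE => /orP[] /eqP -> /=.
  by rewrite !big_cons big_nil addr0.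
have one_memN1 : one_mem_grade_prod (Lmod q K) (- 1).
  (* the literal [-1] is [Negz 0]; unfold it so that [opprK] applies *)
  rewrite -[X in one_mem_grade_prod _ X]/(- 1%:Z).
  exists [:: (a, ad); ((q%:C ^+ 2) *: c, cd)]; split.
    by move=> p; rewrite !inE => /orP[] /eqP -> /=; rewrite opprK ?mem_LmodZ.
  by rewrite !big_cons big_nil addr0 -scalerAl.
exact: (mult_tensor_iso_of_one_mem (mem_Lmod0 q K) (@mem_LmodD _ _ _ _) LmodM
  (strongly_graded LmodM one_mem1 one_memN1 n)).
Qed.
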